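(* Let $u_0\in H^2(\mathbb{R}_+)$ and let $$u(t,x)=\frac{1}{\sqrt{4\pi t}}\int_0^\infty u_0(y)\left[e^{-\frac{(x-y+t)^2}{4t}}-e^{-x}e^{-\frac{(x+y-t)^2}{4t}}\right]dy,$$ which is a solution $u\in C(\mathbb{R}_+,H^2(\mathbb{R}_+))$ of the boundary-value problem $u_t=u_x+u_{xx}$ for $x>0$, $u(t,0)=0$, $u(t,x)\to0$ as $x\to+\infty$, with $u(0,x)=u_0(x)$. Then $$\|u(t,\cdot)\|_{W^{2,\infty}(\mathbb{R}_+)}\to0\quad\text{as } t\to\infty.$$
   Context: $\mathbb{R}_+=(0,\infty)$. *)

From HB Require Import structures.
From mathcomp Require Import all_boot all_order all_algebra.
From mathcomp Require Import all_classical all_reals all_analysis.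
Set Implicit Arguments. Unset Strict Implicit. Unset Printing Implicit Defensive.
Import Order.TTheory GRing.Theory Num.Theory.
Import numFieldNormedType.Exports.
Local Open Scope classical_set_scope.
Local Open Scope ring_scope.

Section Defs.
Variable R : realType.

Definition Rpos : set R := `]0, +oo[%classic.

Local Notation mu := (@lebesgue_measure R).

Definition L2pos (f : R -> R) : Prop :=
  measurable_fun Rpos f /\ (\int[mu]_(x in Rpos) ((f x) ^+ 2)%:E < +oo)%E.

Definition test_fun_pos (phi : R -> R) : Prop :=
  (forall (n : nat) (x : R), derivable (derive1n n phi) x 1) /\
  exists a b : R, 0 < a /\ a <= b /\
    (forall x, ~ (a <= x <= b) -> phi x = 0).

Definition weak_deriv_pos (f g : R -> R) : Prop :=
  forall phi, test_fun_pos phi ->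
    Rintegral mu Rpos (fun x => f x * derive1 phi x) =
    - Rintegral mu Rpos (fun x => g x * phi x).

Definition H2pos (u0 : R -> R) : Prop :=
  exists g1 g2 : R -> R,
    [/\ L2pos u0, L2pos g1, L2pos g2, weak_deriv_pos u0 g1 & weak_deriv_pos g1 g2].

Definition heat_sol (u0 : R -> R) (t x : R) : R :=
  (Num.sqrt (4 * pi * t))^-1 *
  Rintegral mu Rpos (fun y => u0 y *
     (expR (- ((x - y + t) ^+ 2) / (4 * t)) -
      expR (- x) * expR (- ((x + y - t) ^+ 2) / (4 * t)))).

Definition supnorm_pos (f : R -> R) : \bar R :=
  ereal_sup [set (`|f x|)%:E | x in Rpos].

Definition W2inf_norm_pos (f : R -> R) : \bar R :=
  (supnorm_pos f + supnorm_pos (derive1 f) + supnorm_pos (derive1 (derive1 f)))%E.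

End Defs.

From HB Require Import structures.
From mathcomp Require Import all_boot all_order all_algebra.
From mathcomp Require Import all_classical all_reals all_analysis.
From mathcomp Require Import ring lra.
From mathcomp Require Import measurable_realfun.
Set Implicit Arguments. Unset Strict Implicit. Unset Printing Implicit Defensive.
Import Order.TTheory GRing.Theory Num.Theory.
Import numFieldNormedType.Exports.
Local Open Scope classical_set_scope.
Local Open Scope ring_scope.

(* The solution is [c_t ∫ u0(y) k(t,x,y) dy] with [c_t = (4πt)^(-1/2)], where [k] is a
   difference of two Gaussians in [x] of variance [2t].  A Gaussian times a polynomial
   of degree at most two in its argument is bounded by a multiple of the Gaussian of
   twice the variance, so [k] and its first two [x]-derivatives are bounded, uniformly
   for [t >= 1], by [16 (G(x+t, y) + e^(-x) G(t-x, y))], where [G(m, .)] has variance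
   [4t] and [∫ G(m, y)^2 dy = 1/c_t].  The same envelope, with its centre moved by at
   most one, dominates the difference quotients, so one may differentiate twice under
   the integral sign.  Pairing with [u0 ∈ L²] through [ab <= (s/2) a^2 + b^2/(2s)] with
   [s = c_t^(-1/2)] gives [|u|, |u_x|, |u_xx| <= c_t^(1/2) (‖u0‖²/2 + 512)], which is
   [O(t^(-1/4))]. *)

Section gauss.
Variable R : realType.
Local Notation mu := (@lebesgue_measure R).

Definition gauss (v m x : R) := expR (- (x - m) ^+ 2 / v).
Definition gauss1 (v m x : R) := - (2 * (x - m) / v) * gauss v m x.
Definition gauss2 (v m x : R) := ((2 * (x - m) / v) ^+ 2 - 2 / v) * gauss v m x.

Lemma is_derive_gauss v m x : is_derive x (1 : R) (gauss v m) (gauss1 v m x).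
Proof.
have inner : is_derive x (1 : R) (fun z => - (z - m) ^+ 2 / v) (- (2 * (x - m) / v)).
  by apply: is_derive_eq; rewrite /GRing.scale/=; ring.
by rewrite /gauss1 mulrC; apply: is_derive1_comp.
Qed.

Lemma is_derive_gauss1 v m x : is_derive x (1 : R) (gauss1 v m) (gauss2 v m x).
Proof.
have lin : is_derive x (1 : R) (fun z => - (2 * (z - m) / v)) (- (2 / v)).
  by apply: is_derive_eq; rewrite /GRing.scale/=; ring.
apply: is_derive_eq (is_deriveM lin (is_derive_gauss v m x)) _.
by rewrite /gauss2 /gauss1 /GRing.scale/=; ring.
Qed.

Lemma gauss_ge0 v m x : 0 <= gauss v m x.
Proof. exact: expR_ge0. Qed.

Lemma gauss_sqr v m x : v != 0 -> gauss (2 * v) m x ^+ 2 = gauss v m x.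
Proof. by move=> v0; rewrite /gauss expr2 -expRD; congr expR; field. Qed.

Lemma gauss_le_widen v m x : 0 < v -> gauss v m x <= gauss (2 * v) m x.
Proof.
move=> v0; rewrite ler_expR -subr_ge0.
have -> : - (x - m) ^+ 2 / (2 * v) - - (x - m) ^+ 2 / v = (x - m) ^+ 2 / (2 * v).
  by field; rewrite gt_eqF.
by rewrite divr_ge0 ?sqr_ge0 ?mulr_ge0 ?ltW.
Qed.

Lemma sqr_mul_gauss_le v m x : 0 < v ->
  (x - m) ^+ 2 * gauss v m x <= 2 * v * gauss (2 * v) m x.
Proof.
move=> v0; have v2 : 2 * v != 0 by rewrite mulf_neq0 ?gt_eqF.
pose w := (x - m) ^+ 2 / (2 * v).
have w0 : 0 <= w by rewrite divr_ge0 ?sqr_ge0 ?mulr_ge0 ?ltW.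
have wE : (x - m) ^+ 2 = 2 * v * w by rewrite /w mulrC divfK.
have gE : gauss (2 * v) m x = expR (- w) by rewrite /gauss mulNr.
rewrite -gauss_sqr ?gt_eqF// gE wE.
have -> : 2 * v * w * expR (- w) ^+ 2 = 2 * v * expR (- w) * (w * expR (- w)) by ring.
apply: ler_piMr; first by rewrite !mulr_ge0 ?expR_ge0 ?ltW.
by rewrite expRN ler_pdivrMr ?expR_gt0// mul1r; have := expR_ge1Dx w; lra.
Qed.

Lemma norm_gauss1_le v m x : 0 < v ->
  `|gauss1 v m x| <= (1 + 12 / v) * gauss (2 * v) m x.
Proof.
move=> v0; set G := gauss (2 * v) m x.
have G0 : 0 <= G := gauss_ge0 _ _ _.
have Gv0 : 0 <= G / v by rewrite divr_ge0// ltW.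
have gG : gauss v m x <= G := gauss_le_widen m x v0.
have zg : (x - m) ^+ 2 * gauss v m x <= 2 * v * G := sqr_mul_gauss_le m x v0.
set a := `|2 * (x - m) / v|.
have amgm : a <= 1 / 2 + 2 / v ^+ 2 * (x - m) ^+ 2.
  have -> : 2 / v ^+ 2 * (x - m) ^+ 2 = a ^+ 2 / 2.
    by rewrite /a real_normK ?num_real//; field; rewrite gt_eqF.
  by have := sqr_ge0 (a - 1); lra.
rewrite /gauss1 normrM normrN (ger0_norm (gauss_ge0 _ _ _)) -/a.
apply: (le_trans (ler_wpM2r (gauss_ge0 _ _ _) amgm)).
have -> : (1 / 2 + 2 / v ^+ 2 * (x - m) ^+ 2) * gauss v m x =
    gauss v m x / 2 + 2 / v ^+ 2 * ((x - m) ^+ 2 * gauss v m x) by ring.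
have : 2 / v ^+ 2 * ((x - m) ^+ 2 * gauss v m x) <= 4 * (G / v).
  rewrite (_ : 4 * (G / v) = 2 / v ^+ 2 * (2 * v * G)); last by field; rewrite gt_eqF.
  by rewrite ler_wpM2l ?divr_ge0 ?sqr_ge0.
have -> : (1 + 12 / v) * G = G + 12 * (G / v) by field; rewrite gt_eqF.
lra.
Qed.

Lemma norm_gauss2_le v m x : 0 < v ->
  `|gauss2 v m x| <= (1 + 12 / v) * gauss (2 * v) m x.
Proof.
move=> v0; set G := gauss (2 * v) m x.
have G0 : 0 <= G := gauss_ge0 _ _ _.
have Gv0 : 0 <= G / v by rewrite divr_ge0// ltW.
have gG : gauss v m x <= G := gauss_le_widen m x v0.
have zg : (x - m) ^+ 2 * gauss v m x <= 2 * v * G := sqr_mul_gauss_le m x v0.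
rewrite /gauss2 normrM (ger0_norm (gauss_ge0 _ _ _)).
have -> : (2 * (x - m) / v) ^+ 2 = 4 / v ^+ 2 * (x - m) ^+ 2 by field; rewrite gt_eqF.
apply: (le_trans (ler_wpM2r (gauss_ge0 _ _ _) (ler_normB _ _))).
have c1 : 0 <= 4 / v ^+ 2 * (x - m) ^+ 2 by rewrite mulr_ge0 ?sqr_ge0// divr_ge0 ?sqr_ge0.
have c2 : 0 <= 2 / v by rewrite divr_ge0// ltW.
rewrite (ger0_norm c1) (ger0_norm c2).
have -> : (4 / v ^+ 2 * (x - m) ^+ 2 + 2 / v) * gauss v m x =
    4 / v ^+ 2 * ((x - m) ^+ 2 * gauss v m x) + 2 / v * gauss v m x by ring.
have : 4 / v ^+ 2 * ((x - m) ^+ 2 * gauss v m x) <= 8 * (G / v).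
  rewrite (_ : 8 * (G / v) = 4 / v ^+ 2 * (2 * v * G)); last by field; rewrite gt_eqF.
  by rewrite ler_wpM2l ?divr_ge0 ?sqr_ge0.
have : 2 / v * gauss v m x <= 2 * (G / v).
  rewrite (_ : 2 / v * _ = 2 * (gauss v m x / v)); last by ring.
  by rewrite ler_wpM2l// ler_wpM2r// invr_ge0 ltW.
have -> : (1 + 12 / v) * G = G + 12 * (G / v) by field; rewrite gt_eqF.
lra.
Qed.

Lemma norm_gauss_le v m x : 0 < v ->
  `|gauss v m x| <= (1 + 12 / v) * gauss (2 * v) m x.
Proof.
move=> v0; rewrite ger0_norm ?gauss_ge0//; apply: (le_trans (gauss_le_widen m x v0)).
by rewrite ler_peMl ?gauss_ge0// lerDl divr_ge0// ltW.
Qed.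

Lemma gauss_le_shift v m m' x : 0 < v -> `|m - m'| <= 1 ->
  gauss v m x <= expR v^-1 * gauss (2 * v) m' x.
Proof.
move=> v0 mm'; rewrite /gauss -expRD ler_expR -subr_ge0.
have -> : v^-1 + - (x - m') ^+ 2 / (2 * v) - - (x - m) ^+ 2 / v =
    ((x - m - (m - m')) ^+ 2 + 2 * (1 - (m - m') ^+ 2)) / (2 * v).
  by field; rewrite gt_eqF.
apply: divr_ge0; last by rewrite mulr_ge0// ltW.
by rewrite addr_ge0 ?sqr_ge0// mulr_ge0// subr_ge0 -real_normK ?num_real// expr_le1.
Qed.

Lemma measurable_gauss v m (D : set R) : measurable_fun D (gauss v m).
Proof.
apply: measurableT_comp => //; apply: measurable_funM => //.
by apply: measurableT_comp => //; apply: measurable_funX; exact: measurable_funB.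
Qed.

Lemma gauss_normal_fun v m : 0 < v -> gauss v m = normal_fun m (Num.sqrt (v / 2)).
Proof.
move=> v0; apply/funext => x; rewrite /gauss /normal_fun sqr_sqrtr ?divr_ge0 ?ltW//.
by rewrite -mulr_natr divfK ?pnatr_eq0.
Qed.

Lemma EFin_gauss_normal_pdf v m : 0 < v -> let s := Num.sqrt (v / 2) in
  EFin \o gauss v m = (fun x => (normal_peak s)^-1%:E * (normal_pdf m s x)%:E)%E.
Proof.
move=> v0 s; have s0 : s != 0 by rewrite gt_eqF// sqrtr_gt0 divr_gt0.
apply/funext => x; rewrite /= normal_pdfE// -EFinM mulrA mulVf ?mul1r ?gauss_normal_fun//.
by rewrite gt_eqF// normal_peak_gt0.
Qed.

Lemma integrable_gauss v m (D : set (measurableTypeR R)) : measurable D -> 0 < v ->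
  mu.-integrable D (EFin \o gauss v m).
Proof.
move=> mD v0; apply: (@integrableS _ _ _ mu setT D) => //.
by rewrite EFin_gauss_normal_pdf//; apply: integrableZl => //; exact: integrable_normal_pdf.
Qed.

Lemma integral_gauss v m : 0 < v ->
  (\int[mu]_x (gauss v m x)%:E = (Num.sqrt (pi * v))%:E)%E.
Proof.
move=> v0; rewrite -[X in integral _ _ X]/(EFin \o gauss v m) EFin_gauss_normal_pdf//.
rewrite integralZl//; last exact: integrable_normal_pdf.
rewrite integral_normal_pdf mule1 /normal_peak invrK sqr_sqrtr ?divr_ge0 ?ltW//.
by congr (EFin (Num.sqrt _)); rewrite -mulr_natr; field.
Qed.

Lemma Rintegral_gauss_le v m (D : set (measurableTypeR R)) : measurable D -> 0 < v ->
  \int[mu]_(x in D) gauss v m x <= Num.sqrt (pi * v).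
Proof.
move=> mD v0; have g0 x : (0 <= (gauss v m x)%:E)%E by rewrite lee_fin gauss_ge0.
rewrite -lee_fin -(integral_gauss m v0) fineK; last first.
  exact: integrable_fin_num (integrable_gauss m mD v0).
apply: ge0_subset_integral => //; apply/measurable_EFinP; exact: measurable_gauss.
Qed.
End gauss.

Section square_integrable.
Variable R : realType.
Local Notation mu := (@lebesgue_measure R).
Variable D : set (measurableTypeR R).
Hypothesis mD : measurable D.

Lemma integrableZl_EFin (k : R) (f : R -> R) : mu.-integrable D (EFin \o f) ->
  mu.-integrable D (EFin \o (fun y => k * f y)).
Proof.
have -> : EFin \o (fun y => k * f y) = (fun y => k%:E * (EFin \o f) y)%E.
  by apply/funext => y; rewrite /= EFinM.
exact: integrableZl.
Qed.

Lemma integrableD_EFin (f g : R -> R) : mu.-integrable D (EFin \o f) ->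
  mu.-integrable D (EFin \o g) -> mu.-integrable D (EFin \o (fun y => f y + g y)).
Proof.
have -> : EFin \o (fun y => f y + g y) = ((EFin \o f) \+ (EFin \o g))%E.
  by apply/funext => y; rewrite /= EFinD.
exact: integrableD.
Qed.

Lemma mul_le_amgm (a b s : R) : 0 < s -> a * b <= s / 2 * a ^+ 2 + (2 * s)^-1 * b ^+ 2.
Proof.
move=> s0; rewrite -subr_ge0.
have -> : s / 2 * a ^+ 2 + (2 * s)^-1 * b ^+ 2 - a * b = (s * a - b) ^+ 2 / (2 * s).
  by field; rewrite gt_eqF.
by rewrite divr_ge0 ?sqr_ge0// mulr_ge0// ltW.
Qed.

Section product.
Variables (f g : R -> R).
Hypotheses (mf : measurable_fun D f) (mg : measurable_fun D g).
Hypothesis f2 : mu.-integrable D (EFin \o (fun y => f y ^+ 2)).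
Hypothesis g2 : mu.-integrable D (EFin \o (fun y => g y ^+ 2)).

Let amgm_bound s y := s / 2 * f y ^+ 2 + (2 * s)^-1 * g y ^+ 2.

Let integrable_amgm_bound s : mu.-integrable D (EFin \o amgm_bound s).
Proof. by apply: integrableD_EFin; apply: integrableZl_EFin. Qed.

Let norm_mul_le s y : 0 < s -> `|f y * g y| <= amgm_bound s y.
Proof.
move=> s0; rewrite normrM /amgm_bound.
by rewrite -(real_normK (num_real (f y))) -(real_normK (num_real (g y))) mul_le_amgm.
Qed.

Lemma integrable_mul_of_sqr : mu.-integrable D (EFin \o (fun y => f y * g y)).
Proof.
apply: le_integrable (integrable_amgm_bound 1) => //.
  by apply/measurable_EFinP; exact: measurable_funM.
by move=> y _; rewrite /= !lee_fin (le_trans (norm_mul_le y ltr01))// ler_norm.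
Qed.

Lemma Rintegral_mul_le_amgm s : 0 < s ->
  `|\int[mu]_(y in D) (f y * g y)| <=
  s / 2 * \int[mu]_(y in D) f y ^+ 2 + (2 * s)^-1 * \int[mu]_(y in D) g y ^+ 2.
Proof.
move=> s0; apply: (le_trans (le_normr_Rintegral mD integrable_mul_of_sqr)).
rewrite -!RintegralZl// -RintegralD//; try exact: integrableZl_EFin.
apply: le_Rintegral => //; first exact: integrable_norm integrable_mul_of_sqr.
  exact: integrable_amgm_bound.
by move=> y _; exact: norm_mul_le.
Qed.

End product.
End square_integrable.

Section gauss_dominated.
Variable R : realType.
Local Notation mu := (@lebesgue_measure R).
Variables (D : set (measurableTypeR R)) (h : R -> R) (al be m1 m2 v : R).
Hypotheses (mD : measurable D) (mh : measurable_fun D h) (v0 : 0 < v).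
Hypothesis h_le : forall y, D y -> `|h y| <= al * gauss (2 * v) m1 y + be * gauss (2 * v) m2 y.

Let dominant y := 2 * al ^+ 2 * gauss v m1 y + 2 * be ^+ 2 * gauss v m2 y.

Let sqr_le_dominant y : D y -> h y ^+ 2 <= dominant y.
Proof.
move=> Dy; have vn0 : v != 0 by rewrite gt_eqF.
set G1 := gauss (2 * v) m1 y; set G2 := gauss (2 * v) m2 y.
rewrite -real_normK ?num_real// /dominant -(gauss_sqr m1 y vn0) -(gauss_sqr m2 y vn0) -/G1 -/G2.
apply: (@le_trans _ _ ((al * G1 + be * G2) ^+ 2)).
  by rewrite lerXn2r ?nnegrE ?(le_trans _ (h_le Dy))// h_le.
by rewrite -subr_ge0 (_ : _ - _ = (al * G1 - be * G2) ^+ 2) ?sqr_ge0//; ring.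
Qed.

Let integrable_dominant : mu.-integrable D (EFin \o dominant).
Proof.
by apply: integrableD_EFin => //; apply: integrableZl_EFin => //; exact: integrable_gauss.
Qed.

Lemma integrable_sqr_gauss_dominated : mu.-integrable D (EFin \o (fun y => h y ^+ 2)).
Proof.
apply: le_integrable integrable_dominant => //.
  by apply/measurable_EFinP; exact: measurable_funX.
move=> y Dy; rewrite /= !lee_fin !ger0_norm ?sqr_ge0 ?sqr_le_dominant//.
exact: le_trans (sqr_ge0 _) (sqr_le_dominant Dy).
Qed.

Lemma Rintegral_sqr_gauss_dominated_le :
  \int[mu]_(y in D) h y ^+ 2 <= 2 * (al ^+ 2 + be ^+ 2) * Num.sqrt (pi * v).
Proof.
apply: (le_trans (le_Rintegral mD integrable_sqr_gauss_dominated integrable_dominant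
  sqr_le_dominant)).
rewrite /dominant RintegralD//; try by apply: integrableZl_EFin => //; exact: integrable_gauss.
rewrite !RintegralZl//; try exact: integrable_gauss.
have -> : 2 * (al ^+ 2 + be ^+ 2) * Num.sqrt (pi * v) =
  2 * al ^+ 2 * Num.sqrt (pi * v) + 2 * be ^+ 2 * Num.sqrt (pi * v) by ring.
by apply: lerD; (apply: ler_wpM2l; first by rewrite mulr_ge0 ?sqr_ge0);
  exact: Rintegral_gauss_le.
Qed.
End gauss_dominated.

Section heat_kernel.
Variable R : realType.

(* The bracket of the solution formula, written as Gaussians in [x] (see [heat_solE]). *)
Definition kern (t x y : R) :=
  gauss (4 * t) (y - t) x - expR (- x) * gauss (4 * t) (t - y) x.
Definition kern1 (t x y : R) :=
  gauss1 (4 * t) (y - t) x - expR (- x) * (gauss1 (4 * t) (t - y) x - gauss (4 * t) (t - y) x).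
Definition kern2 (t x y : R) :=
  gauss2 (4 * t) (y - t) x - expR (- x) *
    (gauss2 (4 * t) (t - y) x - 2 * gauss1 (4 * t) (t - y) x + gauss (4 * t) (t - y) x).

Lemma is_derive_expRN (x : R) : is_derive x (1 : R) (fun z => expR (- z)) (- expR (- x)).
Proof. by rewrite -mulN1r mulrC; apply: is_derive1_comp. Qed.

Lemma is_derive_kern t y x : is_derive x (1 : R) (kern t ^~ y) (kern1 t x y).
Proof.
apply: is_derive_eq (is_deriveB (is_derive_gauss _ _ x)
  (is_deriveM (is_derive_expRN x) (is_derive_gauss _ _ x))) _.
by rewrite /kern1 /gauss1 /GRing.scale /=; ring.
Qed.

Lemma is_derive_kern1 t y x : is_derive x (1 : R) (kern1 t ^~ y) (kern2 t x y).
Proof.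
apply: is_derive_eq (is_deriveB (is_derive_gauss1 _ _ x)
  (is_deriveM (is_derive_expRN x)
    (is_deriveB (is_derive_gauss1 _ _ x) (is_derive_gauss _ _ x)))) _.
by rewrite /kern2 /GRing.scale /= !fctE; ring.
Qed.

Definition kern_env (t x y : R) :=
  gauss (8 * t) (x + t) y + expR (- x) * gauss (8 * t) (t - x) y.

Definition kern_const (t : R) := 4 * (1 + 12 / (4 * t)).

Lemma kern_const_ge0 t : 0 < t -> 0 <= kern_const t.
Proof. by move=> t0; rewrite mulr_ge0// addr_ge0// divr_ge0// mulr_ge0// ltW. Qed.

Lemma kern_const_le t : 1 <= t -> kern_const t <= 16.
Proof.
move=> t1; have t0 : 0 < t by lra.
have : 12 / (4 * t) <= 3 by rewrite ler_pdivrMr ?mulr_gt0//; lra.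
by rewrite /kern_const; lra.
Qed.

Lemma kern_envE (t x y L : R) : L * kern_env t x y =
  L * gauss (2 * (4 * t)) (x + t) y + L * expR (- x) * gauss (2 * (4 * t)) (t - x) y.
Proof. by rewrite /kern_env mulrDr mulrA (_ : 2 * (4 * t) = 8 * t)//; ring. Qed.

Lemma kern_env_le_shift (t x a y : R) : 0 < t -> `|x - a| <= 1 ->
  kern_env t x y <= expR (8 * t)^-1 *
    (gauss (2 * (8 * t)) (a + t) y + expR (1 - a) * gauss (2 * (8 * t)) (t - a) y).
Proof.
move=> t0 xa; have v0 : 0 < 8 * t by rewrite mulr_gt0.
have g1 : gauss (8 * t) (x + t) y <= expR (8 * t)^-1 * gauss (2 * (8 * t)) (a + t) y.
  by apply: gauss_le_shift; rewrite // opprD addrACA subrr addr0.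
have g2 : gauss (8 * t) (t - x) y <= expR (8 * t)^-1 * gauss (2 * (8 * t)) (t - a) y.
  by apply: gauss_le_shift; rewrite // (_ : t - x - _ = - (x - a)) ?normrN//; ring.
have e : expR (- x) <= expR (1 - a) by rewrite ler_expR; move: xa; rewrite ler_norml; lra.
rewrite /kern_env mulrDr (mulrCA (expR _)); apply: lerD => //.
by apply: ler_pM; rewrite ?expR_ge0 ?gauss_ge0.
Qed.

Lemma norm_sub_expM_le (p q e B G1 G2 : R) : 0 <= e ->
  `|p| <= B * G1 -> `|q| <= 4 * (B * G2) -> `|p - e * q| <= 4 * B * (G1 + e * G2).
Proof.
move=> e0 hp hq; apply: (le_trans (ler_normB _ _)); rewrite normrM (ger0_norm e0).
have BG1 : 0 <= B * G1 := le_trans (normr_ge0 _) hp.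
have : e * `|q| <= e * (4 * (B * G2)) by rewrite ler_wpM2l.
have -> : 4 * B * (G1 + e * G2) = 4 * (B * G1) + e * (4 * (B * G2)) by ring.
lra.
Qed.

Section kern_bounds.
Variables (t x y : R).
Hypothesis t0 : 0 < t.

Let v0 : 0 < 4 * t. Proof. by rewrite mulr_gt0. Qed.
Let B := 1 + 12 / (4 * t).
Let G := gauss (2 * (4 * t)) (t - y) x.

Let B_ge0 : 0 <= B. Proof. by rewrite addr_ge0// divr_ge0// ltW. Qed.

Let kern_env_split : kern_env t x y =
  gauss (2 * (4 * t)) (y - t) x + expR (- x) * G.
Proof.
have e1 : (y - (x + t)) ^+ 2 = (x - (y - t)) ^+ 2 by rewrite -sqrrN; congr (_ ^+ 2); ring.
have e2 : y - (t - x) = x - (t - y) by ring.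
by rewrite /kern_env /G /gauss e1 e2 (_ : 2 * (4 * t) = 8 * t)//; ring.
Qed.

Lemma norm_kern_le : `|kern t x y| <= kern_const t * kern_env t x y.
Proof.
rewrite kern_env_split; apply: norm_sub_expM_le; rewrite ?expR_ge0 ?norm_gauss_le//.
apply: (le_trans (norm_gauss_le _ _ v0)); rewrite -/B -/G.
by rewrite ler_peMl ?mulr_ge0 ?gauss_ge0// ler1n.
Qed.

Lemma norm_kern1_le : `|kern1 t x y| <= kern_const t * kern_env t x y.
Proof.
rewrite kern_env_split; apply: norm_sub_expM_le; rewrite ?expR_ge0 ?norm_gauss1_le//.
apply: (le_trans (ler_normB _ _)).
have := norm_gauss1_le (t - y) x v0; have := norm_gauss_le (t - y) x v0.
rewrite -/B -/G; have : 0 <= B * G by rewrite mulr_ge0 ?gauss_ge0.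
lra.
Qed.

Lemma norm_kern2_le : `|kern2 t x y| <= kern_const t * kern_env t x y.
Proof.
rewrite kern_env_split; apply: norm_sub_expM_le; rewrite ?expR_ge0 ?norm_gauss2_le//.
apply: (le_trans (ler_normD _ _)); apply: (le_trans (lerD (ler_normB _ _) (lexx _))).
rewrite (normrM 2) (@ger0_norm _ 2)//.
have := norm_gauss2_le (t - y) x v0; have := norm_gauss1_le (t - y) x v0.
have := norm_gauss_le (t - y) x v0.
by rewrite -/B -/G; lra.
Qed.
End kern_bounds.

Section measurable_kern.
Variables (D : set R) (t x : R).

Let measurable_gauss_center v (p : R -> R) : measurable_fun D p ->
  measurable_fun D (fun y => gauss v (p y) x).
Proof.
move=> mp; apply: measurableT_comp => //; apply: measurable_funM => //.
by apply: measurableT_comp => //; apply: measurable_funX; exact: measurable_funB.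
Qed.

Let measurable_gauss1_center v (p : R -> R) : measurable_fun D p ->
  measurable_fun D (fun y => gauss1 v (p y) x).
Proof.
move=> mp; apply: measurable_funM; last exact: measurable_gauss_center.
apply: measurableT_comp => //; apply: measurable_funM => //.
by apply: measurable_funM => //; exact: measurable_funB.
Qed.

Let measurable_gauss2_center v (p : R -> R) : measurable_fun D p ->
  measurable_fun D (fun y => gauss2 v (p y) x).
Proof.
move=> mp; apply: measurable_funM; last exact: measurable_gauss_center.
apply: measurable_funB => //; apply: measurable_funX; apply: measurable_funM => //.
by apply: measurable_funM => //; exact: measurable_funB.
Qed.

Let mp1 : measurable_fun D (fun y => y - t). Proof. exact: measurable_funB. Qed.
Let mp2 : measurable_fun D (fun y => t - y). Proof. exact: measurable_funB. Qed.

Lemma measurable_kern : measurable_fun D (kern t x).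
Proof.
apply: measurable_funB; first exact: measurable_gauss_center.
by apply: measurable_funM => //; exact: measurable_gauss_center.
Qed.

Lemma measurable_kern1 : measurable_fun D (kern1 t x).
Proof.
apply: measurable_funB; first exact: measurable_gauss1_center.
apply: measurable_funM => //.
by apply: measurable_funB; [exact: measurable_gauss1_center|exact: measurable_gauss_center].
Qed.

Lemma measurable_kern2 : measurable_fun D (kern2 t x).
Proof.
apply: measurable_funB; first exact: measurable_gauss2_center.
apply: measurable_funM => //; apply: measurable_funD; last exact: measurable_gauss_center.
apply: measurable_funB; first exact: measurable_gauss2_center.
by apply: measurable_funM => //; exact: measurable_gauss1_center.
Qed.
End measurable_kern.
End heat_kernel.

Section L2pos_pairing.
Variable R : realType.
Local Notation mu := (@lebesgue_measure R).
Local Notation Rp := (@Rpos R).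
Variable u0 : R -> R.
Hypothesis hu0 : L2pos u0.

Lemma measurable_Rpos : measurable (Rp : set (measurableTypeR R)).
Proof. exact: measurable_itv. Qed.

Lemma L2pos_integrable_sqr : mu.-integrable Rp (EFin \o (fun y => u0 y ^+ 2)).
Proof.
case: hu0 => mu0 fin0; apply/integrableP; split.
  by apply/measurable_EFinP; exact: measurable_funX.
by under eq_integral do rewrite /= ger0_norm ?sqr_ge0//.
Qed.

Section gauss_dominated_kernel.
Variables (h : R -> R) (al be m1 m2 v : R).
Hypotheses (mh : measurable_fun Rp h) (v0 : 0 < v).
Hypothesis h_le : forall y, Rp y -> `|h y| <= al * gauss (2 * v) m1 y + be * gauss (2 * v) m2 y.

Lemma integrable_L2pos_mul : mu.-integrable Rp (EFin \o (fun y => u0 y * h y)).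
Proof.
have mu0 : measurable_fun Rp u0 by case: hu0.
exact: (@integrable_mul_of_sqr R Rp measurable_Rpos u0 h mu0 mh L2pos_integrable_sqr
  (integrable_sqr_gauss_dominated measurable_Rpos mh v0 h_le)).
Qed.

Lemma norm_Rintegral_L2pos_mul_le s : 0 < s ->
  `|\int[mu]_(y in Rp) (u0 y * h y)| <=
  s / 2 * \int[mu]_(y in Rp) u0 y ^+ 2 +
  (2 * s)^-1 * (2 * (al ^+ 2 + be ^+ 2) * Num.sqrt (pi * v)).
Proof.
move=> s0; have mu0 : measurable_fun Rp u0 by case: hu0.
have h2 := integrable_sqr_gauss_dominated measurable_Rpos mh v0 h_le.
apply: (le_trans (Rintegral_mul_le_amgm measurable_Rpos mu0 mh L2pos_integrable_sqr h2 s0)).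
rewrite lerD2l; apply: ler_wpM2l; first by rewrite invr_ge0 mulr_ge0// ltW.
exact: (Rintegral_sqr_gauss_dominated_le measurable_Rpos mh v0 h_le).
Qed.
End gauss_dominated_kernel.
End L2pos_pairing.

Section differentiation.
Variable R : realType.
Local Notation mu := (@lebesgue_measure R).
Local Notation Rp := (@Rpos R).

Lemma is_derive_Rintegral (B : set (measurableTypeR R)) (f f' : R -> R -> R)
    (G : R -> R) (a : R) : measurable B ->
  (forall x, `]a - 1, a + 1[%classic x -> mu.-integrable B (EFin \o f x)) ->
  (forall x y, is_derive x (1 : R) (f ^~ y) (f' x y)) ->
  (forall y, 0 <= G y) -> mu.-integrable B (EFin \o G) ->
  (forall x y, `]a - 1, a + 1[%classic x -> B y -> `|f' x y| <= G y) ->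
  is_derive a (1 : R) (fun x => \int[mu]_(y in B) f x y) (\int[mu]_(y in B) f' a y).
Proof.
move=> mB intf df G0 intG G_ub.
have Ia : `]a - 1, a + 1[%classic a by rewrite /= in_itv /=; apply/andP; split; lra.
have derf x y : `]a - 1, a + 1[%classic x -> B y -> derivable (f ^~ y) x 1.
  by move=> _ _; exact: ex_derive.
have d1f x y : partial1of2 f x y = f' x y by rewrite partial1of2E derive_val.
have G_ub' x y : `]a - 1, a + 1[%classic x -> B y -> `|partial1of2 f x y| <= G y.
  by rewrite d1f; exact: G_ub.
apply: DeriveDef; first exact: (derivable_under_integral mB Ia intf derf G0 intG G_ub').
rewrite -derive1E (differentiation_under_integral mB Ia intf derf G0 intG G_ub').
by apply: eq_Rintegral => y _; rewrite d1f.
Qed.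

Section differentiation_kernel.
Variables (u0 : R -> R) (t L : R) (kA kB : R -> R -> R).
Hypotheses (hu0 : L2pos u0) (t0 : 0 < t) (L0 : 0 <= L).
Hypothesis mkA : forall x, measurable_fun Rp (kA x).
Hypothesis dkA : forall x y, is_derive x (1 : R) (kA ^~ y) (kB x y).
Hypothesis kA_le : forall x y, `|kA x y| <= L * kern_env t x y.
Hypothesis kB_le : forall x y, `|kB x y| <= L * kern_env t x y.

Lemma is_derive_Rintegral_kern a :
  is_derive a (1 : R) (fun x => \int[mu]_(y in Rp) (u0 y * kA x y))
    (\int[mu]_(y in Rp) (u0 y * kB a y)).
Proof.
pose H y := L * expR (8 * t)^-1 *
  (gauss (2 * (8 * t)) (a + t) y + expR (1 - a) * gauss (2 * (8 * t)) (t - a) y).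
have H0 y : 0 <= H y by rewrite /H !mulr_ge0 ?addr_ge0 ?mulr_ge0 ?expR_ge0 ?gauss_ge0.
have mH : measurable_fun Rp H.
  by apply: measurable_funM => //; apply: measurable_funD => //;
    [|apply: measurable_funM => //]; exact: measurable_gauss.
have intH : mu.-integrable Rp (EFin \o (fun y => u0 y * H y)).
  apply: (integrable_L2pos_mul hu0 mH (v := 8 * t)
    (al := L * expR (8 * t)^-1) (be := L * expR (8 * t)^-1 * expR (1 - a))
    (m1 := a + t) (m2 := t - a)); first by rewrite mulr_gt0.
  by move=> y _; rewrite (ger0_norm (H0 y)) /H mulrDr !mulrA.
apply: (@is_derive_Rintegral Rp (fun x y => u0 y * kA x y) (fun x y => u0 y * kB x y)
  (fun y => `|u0 y * H y|) a (@measurable_Rpos R)).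
(* The derivative hypothesis is solved by instance resolution from [dkA]. *)
- move=> x _; apply: (integrable_L2pos_mul hu0 (mkA x) (v := 4 * t) (al := L)
    (be := L * expR (- x)) (m1 := x + t) (m2 := t - x)); first by rewrite mulr_gt0.
  by move=> y _; rewrite -kern_envE.
- by move=> y; exact: normr_ge0.
- exact: integrable_norm intH.
- move=> x y; rewrite /= in_itv /= => /andP[x1 x2] _.
  rewrite normrM [X in _ <= X]normrM (ger0_norm (H0 y)) ler_wpM2l//.
  rewrite (le_trans (kB_le x y))// /H -mulrA.
  by rewrite ler_wpM2l// kern_env_le_shift// ler_norml; apply/andP; split; lra.
Qed.
End differentiation_kernel.
End differentiation.

Section sup_norms.
Variable R : realType.

Lemma supnorm_pos_ge0 (f : R -> R) : (0 <= supnorm_pos f)%E.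
Proof.
apply: le_ereal_sup_tmp; exists (`|f 1|%:E); last by rewrite lee_fin normr_ge0.
by exists 1 => //; rewrite /Rpos /= in_itv /= andbT ltr01.
Qed.

Lemma supnorm_pos_le (f : R -> R) (b : R) : (forall x, 0 < x -> `|f x| <= b) ->
  (supnorm_pos f <= b%:E)%E.
Proof.
move=> fb; apply: ge_ereal_sup => _ [x x0 <-]; rewrite lee_fin fb//.
by move: x0; rewrite /Rpos /= in_itv /= andbT.
Qed.

Lemma W2inf_norm_pos_ge0 (f : R -> R) : (0 <= W2inf_norm_pos f)%E.
Proof. by rewrite !adde_ge0 ?supnorm_pos_ge0. Qed.

Lemma W2inf_norm_pos_le (f : R -> R) (b : R) :
  (forall x, 0 < x -> `|f x| <= b) ->
  (forall x, 0 < x -> `|derive1 f x| <= b) ->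
  (forall x, 0 < x -> `|derive1 (derive1 f) x| <= b) ->
  (W2inf_norm_pos f <= (3 * b)%:E)%E.
Proof.
move=> f0 f1 f2; rewrite (_ : 3 * b = b + b + b); last by ring.
by rewrite !EFinD !leeD ?supnorm_pos_le.
Qed.
End sup_norms.

Section heat_solution.
Variable R : realType.
Local Notation mu := (@lebesgue_measure R).
Local Notation Rp := (@Rpos R).
Variable u0 : R -> R.
Hypothesis hu0 : L2pos u0.

Definition heat_const (t : R) := (Num.sqrt (4 * pi * t))^-1.

Definition kern_int (k : R -> R -> R -> R) (t x : R) := \int[mu]_(y in Rp) (u0 y * k t x y).

Lemma heat_solE t : heat_sol u0 t = fun x => heat_const t * kern_int (@kern R) t x.
Proof.
apply/funext => x; congr (_ * _); apply: eq_Rintegral => y _.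
have e1 : x - y + t = x - (y - t) by ring.
have e2 : x + y - t = x - (t - y) by ring.
by rewrite /kern /gauss e1 e2.
Qed.

Section derivatives.
Variable t : R.
Hypothesis t0 : 0 < t.

Lemma is_derive_heat_sol x :
  is_derive x (1 : R) (heat_sol u0 t) (heat_const t * kern_int (@kern1 R) t x).
Proof.
rewrite heat_solE; apply: is_deriveZ.
apply: (is_derive_Rintegral_kern (kA := kern t) (kB := kern1 t) hu0 t0 (kern_const_ge0 t0)).
- by move=> z; exact: measurable_kern.
- by move=> z y; exact: is_derive_kern.
- by move=> z y; exact: norm_kern_le.
- by move=> z y; exact: norm_kern1_le.
Qed.

Lemma derive1_heat_sol :
  derive1 (heat_sol u0 t) = fun x => heat_const t * kern_int (@kern1 R) t x.
Proof. by apply/funext => x; rewrite derive1E; have [_ ->] := is_derive_heat_sol x. Qed.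

Lemma is_derive_derive1_heat_sol x :
  is_derive x (1 : R) (derive1 (heat_sol u0 t)) (heat_const t * kern_int (@kern2 R) t x).
Proof.
rewrite derive1_heat_sol; apply: is_deriveZ.
apply: (is_derive_Rintegral_kern (kA := kern1 t) (kB := kern2 t) hu0 t0 (kern_const_ge0 t0)).
- by move=> z; exact: measurable_kern1.
- by move=> z y; exact: is_derive_kern1.
- by move=> z y; exact: norm_kern1_le.
- by move=> z y; exact: norm_kern2_le.
Qed.

Lemma derive2_heat_sol :
  derive1 (derive1 (heat_sol u0 t)) = fun x => heat_const t * kern_int (@kern2 R) t x.
Proof.
by apply/funext => x; rewrite derive1E; have [_ ->] := is_derive_derive1_heat_sol x.
Qed.

End derivatives.

Lemma heat_const_gt0 (t : R) : 0 < t -> 0 < heat_const t.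
Proof. by move=> t0; rewrite invr_gt0 sqrtr_gt0 !mulr_gt0// pi_gt0. Qed.

Lemma sqrt_heat_const_cvg0 : Num.sqrt (heat_const t) @[t --> +oo] --> (0 : R).
Proof.
have inv0 : (4 * pi * t)^-1 @[t --> +oo] --> (0 : R).
  apply/gtr0_cvgV0; first by near=> t; rewrite !mulr_gt0 ?pi_gt0.
  apply: (ger_cvgy _ cvg_id); near=> t.
  by rewrite ler_peMl//; have := pi_ge2 R; lra.
have := cvg_comp _ _ (cvg_comp _ _ inv0 (@sqrt_continuous R 0)) (@sqrt_continuous R _).
rewrite !sqrtr0; apply: cvg_trans; apply: near_eq_cvg; near=> t.
by rewrite /heat_const /= sqrtrV// !mulr_ge0 ?pi_ge0.
Unshelve. all: end_near. Qed.

Lemma norm_heat_kern_int_le (k : R -> R -> R -> R) (t x : R) : 1 <= t -> 0 < x ->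
  measurable_fun Rp (k t x) ->
  (forall y, `|k t x y| <= kern_const t * kern_env t x y) ->
  `|heat_const t * kern_int k t x| <=
    Num.sqrt (heat_const t) * (\int[mu]_(y in Rp) u0 y ^+ 2 / 2 + 512).
Proof.
move=> t1 x0 mk k_le; have t0 : 0 < t by lra.
have c0 := heat_const_gt0 t0; set c := heat_const t.
have sc0 : 0 < Num.sqrt c by rewrite sqrtr_gt0.
set C := kern_const t; set be := C * expR (- x).
have C0 : 0 <= C := kern_const_ge0 t0.
have C16 : C <= 16 := kern_const_le t1.
have be0 : 0 <= be by rewrite mulr_ge0// expR_ge0.
have beC : be <= C by rewrite ler_piMr// expR_le1 oppr_le0 ltW.
have v0 : 0 < 4 * t by rewrite mulr_gt0.
have k_le' y : Rp y -> `|k t x y| <=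
    C * gauss (2 * (4 * t)) (x + t) y + be * gauss (2 * (4 * t)) (t - x) y.
  by move=> _; rewrite /be -kern_envE.
(* AM-GM with weight [s = c^(-1/2)], balanced because [∫ envelope^2 ~ 1/c]. *)
have si0 : 0 < (Num.sqrt c)^-1 by rewrite invr_gt0.
have := norm_Rintegral_L2pos_mul_le hu0 mk v0 k_le' si0.
rewrite (_ : Num.sqrt (pi * (4 * t)) = c^-1); last by rewrite invrK mulrA (mulrC pi).
move=> hI; rewrite normrM (ger0_norm (ltW c0)); apply: (le_trans (ler_wpM2l (ltW c0) hI)).
set A := \int[mu]_(y in Rp) _; set sc := Num.sqrt c.
have cE : c = sc ^+ 2 by rewrite sqr_sqrtr// ltW.
have -> : c * (sc^-1 / 2 * A + (2 * sc^-1)^-1 * (2 * (C ^+ 2 + be ^+ 2) * c^-1)) =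
    sc * (A / 2 + (C ^+ 2 + be ^+ 2)) by rewrite cE; field; rewrite gt_eqF.
rewrite ler_wpM2l ?lerD2l ?(ltW sc0)//.
have : be ^+ 2 <= C ^+ 2 by rewrite lerXn2r ?nnegrE.
have : C ^+ 2 <= 16 ^+ 2 by rewrite lerXn2r ?nnegrE.
by rewrite (_ : 16 ^+ 2 = 256 :> R); [lra | rewrite expr2 -natrM].
Qed.

Lemma W2inf_norm_heat_sol_le t : 1 <= t ->
  (W2inf_norm_pos (heat_sol u0 t) <=
    (3 * (Num.sqrt (heat_const t) * (\int[mu]_(y in Rp) u0 y ^+ 2 / 2 + 512)))%:E)%E.
Proof.
move=> t1; have t0 : 0 < t by lra.
apply: W2inf_norm_pos_le => x x0.
- rewrite heat_solE; apply: norm_heat_kern_int_le => // y.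
    exact: measurable_kern.
  exact: norm_kern_le.
- rewrite derive1_heat_sol//; apply: norm_heat_kern_int_le => // y.
    exact: measurable_kern1.
  exact: norm_kern1_le.
- rewrite derive2_heat_sol//; apply: norm_heat_kern_int_le => // y.
    exact: measurable_kern2.
  exact: norm_kern2_le.
Qed.
End heat_solution.

Theorem lemma4p3 (R : realType) (u0 : R -> R) :
  H2pos u0 ->
  (forall t x : R, 0 < t -> 0 < x ->
     derivable (heat_sol u0 t) x 1 /\ derivable (derive1 (heat_sol u0 t)) x 1) /\
  (W2inf_norm_pos (heat_sol u0 t) @[t --> +oo] --> 0%E).
Proof.
(* Only [u0 ∈ L²(R_+)] is used. *)
move=> [g1 [g2 [hu0 _ _ _ _]]]; split.
  move=> t x t0 _; split; apply: ex_derive.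
    exact: is_derive_heat_sol.
  exact: is_derive_derive1_heat_sol.
pose K := \int[lebesgue_measure]_(y in @Rpos R) u0 y ^+ 2 / 2 + 512.
apply: (squeeze_cvge (f := cst 0%E) (h := fun t => (3 * (Num.sqrt (heat_const t) * K))%:E)).
- by near=> t; rewrite W2inf_norm_pos_ge0 W2inf_norm_heat_sol_le.
- exact: cvg_cst.
- apply: cvg_EFin; first by near=> t.
  rewrite -(mulr0 3) -(mul0r K); apply: cvgMr; apply: cvgMl.
  exact: sqrt_heat_const_cvg0.
Unshelve. all: end_near. Qed.
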